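(* For every finite set $\Gamma$, the assignment $X\mapsto TX$ (tape maps) is closed under the unit and Kleisli extension of the store monad with store $S=\mathbb Z\times\Gamma^{\mathbb Z}$: for every set $X$ and $x\in X$, $\eta(x)\in TX$; and for every $p\in TX$ and every map $f:X\to TY$, $f^\dagger(p)\in TY$. Hence the tape monad is a well-defined submonad of the store monad.
   Context: Store monad over $S$: $X\mapsto(X\times S)^S$ with $\eta(x)(s)=(x,s)$ and, for $p=\langle r,z,t\rangle$ (writing $s=(i,\sigma)$) and $f:X\to(Y\times S)^S$, $f^\dagger(p)(i,\sigma)=f(r(i,\sigma))(z(i,\sigma),t(i,\sigma))$. Notation: $\sigma=_{i\pm k}\sigma'$ iff $\sigma(j)=\sigma'(j)$ whenever $|i-j|\le k$; $\sigma=^{i\pm k}\sigma'$ iff $\sigma(j)=\sigma'(j)$ whenever $|i-j|>k$; $\sigma_{+j}=\sigma\circ(\lambda i.i+j)$. $TX$ is the set of $\langle r,z,t\rangle:\mathbb Z\times\Gamma^{\mathbb Z}\to X\times\mathbb Z\times\Gamma^{\mathbb Z}$ for which there is $k\ge0$ such that for all $i,j\in\mathbb Z$ and all $\sigma,\sigma'$ with $\sigma=_{i\pm k}\sigma'$: $t(i,\sigma)=_{i\pm k}t(i,\sigma')$, $r(i,\sigma)=r(i,\sigma')$, $|z(i,\sigma)-i|\le k$, $t(i,\sigma)=^{i\pm k}\sigma$, $z(i,\sigma)=z(i,\sigma')$, $t(i,\sigma_{+j})=t(i+j,\sigma)_{+j}$, $r(i,\sigma_{+j})=r(i+j,\sigma)$,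 $z(i,\sigma_{+j})=z(i+j,\sigma)-j$. *)

From Stdlib Require Import ZArith List.
Open Scope Z_scope.

Definition tape (G : Type) := Z -> G.
Definition store (G : Type) := (Z * tape G)%type.

Definition StoreM (G X : Type) := store G -> (X * store G)%type.

Definition eta {G X : Type} (x : X) : StoreM G X := fun s => (x, s).

Definition kext {G X Y : Type} (f : X -> StoreM G Y) (p : StoreM G X) : StoreM G Y :=
  fun s => f (fst (p s)) (snd (p s)).

Definition r_of {G X} (p : StoreM G X) (i : Z) (sg : tape G) : X := fst (p (i, sg)).
Definition z_of {G X} (p : StoreM G X) (i : Z) (sg : tape G) : Z := fst (snd (p (i, sg))).
Definition t_of {G X} (p : StoreM G X) (i : Z) (sg : tape G) : tape G := snd (snd (p (i, sg))).

Definition eq_near {G} (i k : Z) (sg sg' : tape G) : Prop :=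
  forall j, Z.abs (i - j) <= k -> sg j = sg' j.
Definition eq_far {G} (i k : Z) (sg sg' : tape G) : Prop :=
  forall j, Z.abs (i - j) > k -> sg j = sg' j.
Definition shift {G} (sg : tape G) (j : Z) : tape G := fun i => sg (i + j).

Definition is_tape_map {G X : Type} (p : StoreM G X) : Prop :=
  exists k : Z, 0 <= k /\
    forall (i j : Z) (sg sg' : tape G), eq_near i k sg sg' ->
      eq_near i k (t_of p i sg) (t_of p i sg') /\
      r_of p i sg = r_of p i sg' /\
      Z.abs (z_of p i sg - i) <= k /\
      eq_far i k (t_of p i sg) sg /\
      z_of p i sg = z_of p i sg' /\
      t_of p i (shift sg j) = shift (t_of p (i + j) sg) j /\
      r_of p i (shift sg j) = r_of p (i + j) sg /\
      z_of p i (shift sg j) = z_of p (i + j) sg - j.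

Definition finite_type (G : Type) : Prop := exists l : list G, forall g, In g l.

From Pilot Require Import Defs.
From Stdlib Require Import ZArith List Lia.

(* The unit has radius 0.  For f^dagger(p), the key point
   is that the continuation maps f x actually used admit a COMMON radius K:
   by shift invariance every result r(i, sigma) of p equals r(0, sigma') for a
   shifted tape sigma', and r(0, -) only reads the 2k+1 cells around 0, so
   since G is finite it takes finitely many values ([finite_windows],
   [bounded_on_list]).  With such a K, f^dagger(p) has radius k + K
   ([kext_radius]): the head moves at most k then K cells, and cells farther
   than k + K from the start are never touched. *)

Record tape_radius {G X : Type} (k : Z) (p : StoreM G X) : Prop := {
  radius_nonneg : 0 <= k;
  radius_t_local : forall i sg sg', eq_near i k sg sg' ->
    eq_near i k (t_of p i sg) (t_of p i sg');
  radius_r_local : forall i sg sg', eq_near i k sg sg' -> r_of p i sg = r_of p i sg';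
  radius_z_local : forall i sg sg', eq_near i k sg sg' -> z_of p i sg = z_of p i sg';
  radius_z_bound : forall i sg, Z.abs (z_of p i sg - i) <= k;
  radius_t_far : forall i sg, eq_far i k (t_of p i sg) sg;
  radius_t_shift : forall i j sg, t_of p i (Defs.shift sg j) = Defs.shift (t_of p (i + j) sg) j;
  radius_r_shift : forall i j sg, r_of p i (Defs.shift sg j) = r_of p (i + j) sg;
  radius_z_shift : forall i j sg, z_of p i (Defs.shift sg j) = z_of p (i + j) sg - j
}.

Lemma eq_near_refl {G : Type} (i k : Z) (sg : tape G) : eq_near i k sg sg.
Proof. intros j _; reflexivity. Qed.

Lemma eq_near_weaken {G : Type} (i k k' : Z) (sg sg' : tape G) :
  k <= k' -> eq_near i k' sg sg' -> eq_near i k sg sg'.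
Proof. intros Hk H j Hj; apply H; lia. Qed.

Lemma is_tape_map_radius {G X : Type} (p : StoreM G X) :
  is_tape_map p <-> exists k, tape_radius k p.
Proof.
  split.
  - intros [k [Hk H]]. exists k.
    split; auto; intros.
    + apply (H i 0 sg sg'); auto.
    + apply (H i 0 sg sg'); auto.
    + apply (H i 0 sg sg'); auto.
    + apply (H i 0 sg sg); apply eq_near_refl.
    + apply (H i 0 sg sg); apply eq_near_refl.
    + apply (H i j sg sg); apply eq_near_refl.
    + apply (H i j sg sg); apply eq_near_refl.
    + apply (H i j sg sg); apply eq_near_refl.
  - intros [k Hp]. exists k. split; [apply (radius_nonneg _ _ Hp)|].
    intros i j sg sg' Hn.
    repeat split; eauto using radius_t_local, radius_r_local, radius_z_local,
      radius_z_bound, radius_t_far, radius_t_shift, radius_r_shift, radius_z_shift.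
Qed.

Lemma t_of_agree {G X : Type} (k z m : Z) (q : StoreM G X) (sg sg' : tape G) :
  tape_radius k q -> eq_near z k sg sg' -> sg m = sg' m ->
  t_of q z sg m = t_of q z sg' m.
Proof.
  intros Hq Hn Hm.
  destruct (Z_le_gt_dec (Z.abs (z - m)) k) as [Hle | Hgt].
  - exact (radius_t_local _ _ Hq z sg sg' Hn m Hle).
  - rewrite (radius_t_far _ _ Hq z sg m Hgt), (radius_t_far _ _ Hq z sg' m Hgt).
    exact Hm.
Qed.

Lemma t_of_near_wide {G X : Type} (k k' i : Z) (q : StoreM G X) (sg sg' : tape G) :
  tape_radius k q -> k <= k' -> eq_near i k' sg sg' ->
  eq_near i k' (t_of q i sg) (t_of q i sg').
Proof.
  intros Hq Hk Hn m Hm.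
  apply (t_of_agree k); auto.
  apply (eq_near_weaken _ _ k' _ _ Hk Hn).
Qed.

Lemma tape_radius_mono {G X : Type} (k k' : Z) (p : StoreM G X) :
  tape_radius k p -> k <= k' -> tape_radius k' p.
Proof.
  intros Hp Hk. pose proof (radius_nonneg _ _ Hp).
  split; intros.
  - lia.
  - eapply t_of_near_wide; eauto.
  - eapply radius_r_local; eauto using eq_near_weaken.
  - eapply radius_z_local; eauto using eq_near_weaken.
  - pose proof (radius_z_bound _ _ Hp i sg); lia.
  - intros m Hm. apply (radius_t_far _ _ Hp); lia.
  - apply (radius_t_shift _ _ Hp).
  - apply (radius_r_shift _ _ Hp).
  - apply (radius_z_shift _ _ Hp).
Qed.

Lemma eta_radius {G X : Type} (x : X) : tape_radius (G := G) 0 (eta x).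
Proof.
  split; intros; unfold r_of, z_of, t_of, eta; simpl; try lia; auto.
  - intros m _; reflexivity.
Qed.

Definition upd {G : Type} (t : tape G) (a : Z) (g : G) : tape G :=
  fun j => if Z.eq_dec j a then g else t j.

Lemma finite_windows {G : Type} (l : list G) (Hl : forall g, In g l) :
  forall (n : nat) (a : Z), exists ws : list (tape G), forall t : tape G,
    exists w, In w ws /\ forall j, a <= j < a + Z.of_nat n -> t j = w j.
Proof.
  induction n as [|n IH]; intros a.
  - exists (map (fun g (_ : Z) => g) l). intros t.
    exists (fun _ => t a). split.
    + apply (in_map (fun g (_ : Z) => g)), Hl.
    + intros j Hj; lia.
  - destruct (IH (a + 1)) as [ws Hws].
    exists (flat_map (fun g => map (fun w => upd w a g) ws) l). intros t.
    destruct (Hws t) as [w [Hw Hagree]].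
    exists (upd w a (t a)). split.
    + apply in_flat_map. exists (t a). split; [apply Hl|].
      apply (in_map (fun w => upd w a (t a))), Hw.
    + intros j Hj. unfold upd. destruct (Z.eq_dec j a) as [-> | Hne]; auto.
      apply Hagree; lia.
Qed.

Lemma bounded_on_list {A : Type} (Q : Z -> A -> Prop)
  (Qmono : forall K K' a, Q K a -> K <= K' -> Q K' a)
  (Qex : forall a, exists K, Q K a) :
  forall xs : list A, exists K, forall a, In a xs -> Q K a.
Proof.
  induction xs as [|x xs [K HK]].
  - exists 0. intros a [].
  - destruct (Qex x) as [Kx Hx]. exists (Z.max Kx K).
    intros a [<- | Ha]; eapply Qmono; eauto; lia.
Qed.

Lemma continuations_uniform_radius {G X Y : Type} (l : list G) (Hl : forall g, In g l)
  (k : Z) (p : StoreM G X) (f : X -> StoreM G Y) :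
  tape_radius k p -> (forall x, exists K, tape_radius K (f x)) ->
  exists K, 0 <= K /\ forall i sg, tape_radius K (f (r_of p i sg)).
Proof.
  intros Hp Hf. pose proof (radius_nonneg _ _ Hp) as Hk.
  destruct (finite_windows l Hl (Z.to_nat (2 * k + 1)) (- k)) as [ws Hws].
  destruct (bounded_on_list (fun K w => tape_radius K (f (r_of p 0 w))))
    with (xs := ws) as [K HK].
  { intros K K' w Hw HKK'; exact (tape_radius_mono _ _ _ Hw HKK'). }
  { intros w; apply Hf. }
  exists (Z.max 0 K). split; [lia|]. intros i sg.
  (* r(i, sigma) = r(0, sigma_{+i}), and r(0, -) reads only the cells -k..k *)
  replace (r_of p i sg) with (r_of p 0 (Defs.shift sg i))
    by exact (radius_r_shift _ _ Hp 0 i sg).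
  destruct (Hws (Defs.shift sg i)) as [w [Hw Hagree]].
  rewrite (radius_r_local _ _ Hp 0 (Defs.shift sg i) w).
  - eapply tape_radius_mono; [apply HK, Hw | lia].
  - intros j Hj; apply Hagree; lia.
Qed.

Lemma kext_at {G X Y : Type} (f : X -> StoreM G Y) (p : StoreM G X) i sg :
  kext f p (i, sg) = f (r_of p i sg) (z_of p i sg, t_of p i sg).
Proof. unfold kext, r_of, z_of, t_of. destruct (p (i, sg)) as [x [z t]]; reflexivity. Qed.

Lemma kext_r {G X Y : Type} (f : X -> StoreM G Y) p i sg :
  r_of (kext f p) i sg = r_of (f (r_of p i sg)) (z_of p i sg) (t_of p i sg).
Proof. unfold r_of at 1; rewrite kext_at; reflexivity. Qed.

Lemma kext_z {G X Y : Type} (f : X -> StoreM G Y) p i sg :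
  z_of (kext f p) i sg = z_of (f (r_of p i sg)) (z_of p i sg) (t_of p i sg).
Proof. unfold z_of at 1; rewrite kext_at; reflexivity. Qed.

Lemma kext_t {G X Y : Type} (f : X -> StoreM G Y) p i sg :
  t_of (kext f p) i sg = t_of (f (r_of p i sg)) (z_of p i sg) (t_of p i sg).
Proof. unfold t_of at 1; rewrite kext_at; reflexivity. Qed.

Lemma agree_near_new_head {G X : Type} (k K i : Z) (p : StoreM G X) (sg sg' : tape G) :
  tape_radius k p -> 0 <= K -> eq_near i (k + K) sg sg' ->
  eq_near (z_of p i sg) K (t_of p i sg) (t_of p i sg').
Proof.
  intros Hp HK Hn m Hm.
  pose proof (radius_z_bound _ _ Hp i sg).
  apply (t_of_near_wide k (k + K)); auto; lia.
Qed.

Lemma kext_radius {G X Y : Type} (k K : Z) (p : StoreM G X) (f : X -> StoreM G Y) :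
  tape_radius k p -> 0 <= K -> (forall i sg, tape_radius K (f (r_of p i sg))) ->
  tape_radius (k + K) (kext f p).
Proof.
  intros Hp HK Hf. pose proof (radius_nonneg _ _ Hp) as Hk.
  assert (Hfirst : forall i sg sg', eq_near i (k + K) sg sg' ->
            r_of p i sg' = r_of p i sg /\ z_of p i sg' = z_of p i sg /\
            eq_near (z_of p i sg) K (t_of p i sg) (t_of p i sg')).
  { intros i sg sg' Hn.
    assert (Hn0 : eq_near i k sg sg') by (apply (eq_near_weaken _ _ (k + K)); auto; lia).
    split; [|split].
    - symmetry; exact (radius_r_local _ _ Hp i sg sg' Hn0).
    - symmetry; exact (radius_z_local _ _ Hp i sg sg' Hn0).
    - exact (agree_near_new_head k K i p sg sg' Hp HK Hn). }
  split.
  - lia.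
  - intros i sg sg' Hn m Hm.
    destruct (Hfirst i sg sg' Hn) as (Hr & Hz & Hnear).
    rewrite !kext_t, Hr, Hz.
    apply (t_of_agree K); auto.
    apply (t_of_near_wide k (k + K)); auto; lia.
  - intros i sg sg' Hn.
    destruct (Hfirst i sg sg' Hn) as (Hr & Hz & Hnear).
    rewrite !kext_r, Hr, Hz. exact (radius_r_local _ _ (Hf i sg) _ _ _ Hnear).
  - intros i sg sg' Hn.
    destruct (Hfirst i sg sg' Hn) as (Hr & Hz & Hnear).
    rewrite !kext_z, Hr, Hz. exact (radius_z_local _ _ (Hf i sg) _ _ _ Hnear).
  - intros i sg. rewrite kext_z.
    pose proof (radius_z_bound _ _ Hp i sg).
    pose proof (radius_z_bound _ _ (Hf i sg) (z_of p i sg) (t_of p i sg)).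
    lia.
  - intros i sg m Hm. rewrite kext_t.
    pose proof (radius_z_bound _ _ Hp i sg).
    rewrite (radius_t_far _ _ (Hf i sg)) by lia.
    apply (radius_t_far _ _ Hp); lia.
  - intros i j sg.
    rewrite !kext_t, (radius_r_shift _ _ Hp), (radius_z_shift _ _ Hp),
      (radius_t_shift _ _ Hp), (radius_t_shift _ _ (Hf (i + j) sg)).
    f_equal. f_equal. lia.
  - intros i j sg.
    rewrite !kext_r, (radius_r_shift _ _ Hp), (radius_z_shift _ _ Hp),
      (radius_t_shift _ _ Hp), (radius_r_shift _ _ (Hf (i + j) sg)).
    f_equal. lia.
  - intros i j sg.
    rewrite !kext_z, (radius_r_shift _ _ Hp), (radius_z_shift _ _ Hp),
      (radius_t_shift _ _ Hp), (radius_z_shift _ _ (Hf (i + j) sg)).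
    replace (z_of p (i + j) sg - j + j) with (z_of p (i + j) sg) by lia.
    reflexivity.
Qed.

Theorem mainTheorem15 (G : Type) (HG : finite_type G) :
  (forall (X : Type) (x : X), is_tape_map (G := G) (eta x)) /\
  (forall (X Y : Type) (p : StoreM G X) (f : X -> StoreM G Y),
      is_tape_map p -> (forall x, is_tape_map (f x)) ->
      is_tape_map (kext f p)).
Proof.
  split.
  - intros X x. apply is_tape_map_radius. exists 0. apply eta_radius.
  - intros X Y p f Hp Hf.
    destruct HG as [l Hl].
    destruct (proj1 (is_tape_map_radius p) Hp) as [k Hk].
    destruct (continuations_uniform_radius l Hl k p f Hk) as [K [HK Hcont]].
    { intros x; apply is_tape_map_radius, Hf. }
    apply is_tape_map_radius. exists (k + K).
    exact (kext_radius k K p f Hk HK Hcont).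
Qed.
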